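(* Let $M,N\in\mathbb{S}^{q+r}$ with $N\in\boldsymbol{\Pi}_{q,r}$. (a) Assume $N$ has at least one positive eigenvalue. Then $\mathcal{Z}_r(N)\subseteq\mathcal{Z}_r(M)$ if and only if $x^\top Mx\ge 0$ for all $x\in\mathbb{R}^{q+r}$ satisfying $x^\top Nx\ge 0$. (b) Assume $N_{22}<0$. Then $\mathcal{Z}_r(N)\subseteq\mathcal{Z}_r^+(M)$ if and only if $x^\top Mx>0$ for all nonzero $x\in\mathbb{R}^{q+r}$ satisfying $x^\top Nx\ge 0$.
   Context: $\mathbb{S}^k$ denotes the real symmetric $k\times k$ matrices; for symmetric matrices, $A\ge 0$ ($A>0$) means positive semidefinite (definite), $A<0$ negative definite. $A^\dagger$ is the Moore–Penrose pseudo-inverse. Any $N\in\mathbb{S}^{q+r}$ is partitioned as $N=\begin{bmatrix}N_{11}&N_{12}\\ N_{21}&N_{22}\end{bmatrix}$ with $N_{11}\in\mathbb{S}^q$, $N_{22}\in\mathbb{S}^r$ (same for $M$). The generalized Schur complement is $N\mid N_{22}:=N_{11}-N_{12}N_{22}^\dagger N_{21}$. The set $\boldsymbol{\Pi}_{q,r}$ consists of all $N\in\mathbb{S}^{q+r}$ with $N_{22}\le 0$, $N\mid N_{22}\ge 0$ and $\ker N_{22}\subseteq\ker N_{12}$. Define $\mathcal{Z}_r(\Pi)=\{Z\in\mathbb{R}^{r\times q}:\begin{bmatrix}I_q\\ Z\end{bmatrix}^\top\Pi\begin{bmatrix}I_q\\ Z\end{bmatrix}\ge 0\}$ and $\mathcal{Z}_r^+(\Pi)$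 the same with $>0$. *)

From HB Require Import structures.
From mathcomp Require Import all_boot all_order all_algebra.
From mathcomp Require Import reals.
Set Implicit Arguments. Unset Strict Implicit. Unset Printing Implicit Defensive.
Import Order.TTheory GRing.Theory Num.Theory.
Local Open Scope ring_scope.

Section Defs.
Variable R : realType.

Definition sym_mx n (A : 'M[R]_n) : Prop := A^T = A.

Definition qform n (A : 'M[R]_n) (x : 'cV[R]_n) : R := (x^T *m A *m x) 0 0.

Definition psd n (A : 'M[R]_n) : Prop := forall x : 'cV[R]_n, 0 <= qform A x.
Definition pd n (A : 'M[R]_n) : Prop := forall x : 'cV[R]_n, x != 0 -> 0 < qform A x.
Definition nsd n (A : 'M[R]_n) : Prop := forall x : 'cV[R]_n, qform A x <= 0.
Definition nd n (A : 'M[R]_n) : Prop := forall x : 'cV[R]_n, x != 0 -> qform A x < 0.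

Definition is_MP_inverse m n (A : 'M[R]_(m, n)) (X : 'M[R]_(n, m)) : Prop :=
  [/\ A *m X *m A = A, X *m A *m X = X, (A *m X)^T = A *m X & (X *m A)^T = X *m A].

Definition schur_psd q r (N : 'M[R]_(q + r)) : Prop :=
  exists X : 'M[R]_r, is_MP_inverse (drsubmx N) X /\
    psd (ulsubmx N - ursubmx N *m X *m dlsubmx N).

Definition Pi_set q r (N : 'M[R]_(q + r)) : Prop :=
  [/\ sym_mx N, nsd (drsubmx N), schur_psd N &
      forall x : 'cV[R]_r, drsubmx N *m x = 0 -> ursubmx N *m x = 0].

Definition IZ q r (Z : 'M[R]_(r, q)) : 'M[R]_(q + r, q) := col_mx 1%:M Z.

Definition Zset q r (P : 'M[R]_(q + r)) (Z : 'M[R]_(r, q)) : Prop :=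
  psd ((IZ Z)^T *m P *m IZ Z).
Definition Zset_pos q r (P : 'M[R]_(q + r)) (Z : 'M[R]_(r, q)) : Prop :=
  pd ((IZ Z)^T *m P *m IZ Z).

End Defs.

From HB Require Import structures.
From mathcomp Require Import all_boot all_order all_algebra.
From mathcomp Require Import reals ring lra.

(* Every [x] with [x^T N x >= 0] and nonzero top block [xi] lies on the graph of
   some [Z] in [Z_r(N)]: writing [x^T N x = xi^T P xi + (eta + K xi)^T N22 (eta + K xi)]
   with [P = N | N22 >= 0], one takes [Z = -K + z l] with [z = eta + K xi] and a
   row [l] normalised by [l xi = 1] and chosen so that [P + l^T l z^T N22 z >= 0].
   Hence inclusions of [Z_r(N)] transfer to such [x].  The vectors with [xi = 0]
   are handled either by a limiting argument along [(x1, -K x1) + t (0, eta)]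
   (which needs [q > 0], a consequence of [N] having a positive eigenvalue while
   [N22 <= 0]) or, when [N22 < 0], by the fact that they are [N]-negative. *)

Set Implicit Arguments. Unset Strict Implicit. Unset Printing Implicit Defensive.
Import Order.TTheory GRing.Theory Num.Theory.
Local Open Scope ring_scope.

Section QuadraticForms.
Variable R : realType.

Definition polar n (M : 'M[R]_n) (y z : 'cV[R]_n) : R :=
  (y^T *m M *m z + z^T *m M *m y) 0 0.

Lemma polarC n (M : 'M[R]_n) y z : polar M y z = polar M z y.
Proof. by rewrite /polar addrC. Qed.

Lemma polarE n (M : 'M[R]_n) y z : (y^T *m (M + M^T) *m z) 0 0 = polar M y z.
Proof.
rewrite /polar mulmxDr mulmxDl [in RHS]mxE [in LHS]mxE; congr (_ + _).
have -> : y^T *m M^T *m z = (z^T *m M *m y)^T by rewrite !trmx_mul trmxK mulmxA.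
by rewrite [LHS]mxE.
Qed.

Lemma polar_diag n (M : 'M[R]_n) y : polar M y y = 2 * qform M y.
Proof. by rewrite /polar /qform mxE; lra. Qed.

Lemma qformZ n (M : 'M[R]_n) c z : qform M (c *: z) = c ^+ 2 * qform M z.
Proof.
rewrite /qform [(c *: z)^T]linearZ /= -!scalemxAl -!scalemxAr scalerA [LHS]mxE.
by rewrite expr2.
Qed.

Lemma qformDZ n (M : 'M[R]_n) y z t :
  qform M (y + t *: z) = qform M y + t * polar M y z + t ^+ 2 * qform M z.
Proof.
rewrite /qform /polar [(y + _)^T]linearD /= [(t *: z)^T]linearZ /=.
rewrite !mulmxDl !mulmxDr -!scalemxAl -!scalemxAr scalerA.
move: (y^T *m M *m y) (y^T *m M *m z) (z^T *m M *m y) (z^T *m M *m z) => a b c d.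
by rewrite !mxE expr2; ring.
Qed.

Lemma qform_mulmx m n (A : 'M[R]_(m, n)) (M : 'M[R]_m) v :
  qform (A^T *m M *m A) v = qform M (A *m v).
Proof. by rewrite /qform trmx_mul !mulmxA. Qed.

Lemma qform_col0_mx q r (N : 'M[R]_(q + r)) eta :
  qform N (col_mx 0 eta) = qform (drsubmx N) eta.
Proof.
rewrite /qform -{1}(submxK N) tr_col_mx trmx0 mul_row_block mul_row_col.
by rewrite !mul0mx mulmx0 !add0r.
Qed.

Lemma trmx_mul_self_gt0 n (x : 'cV[R]_n) : x != 0 -> 0 < (x^T *m x) 0 0.
Proof.
move=> x_neq0; rewrite mxE.
have [i xi_neq0 | x_eq0] := pickP (fun i => x i 0 != 0); last first.
  case/eqP: x_neq0; apply/matrixP=> i j; rewrite !ord1 mxE.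
  by move/negbFE/eqP: (x_eq0 i).
rewrite (bigD1 i) //= ltr_pwDl ?sumr_ge0 // => [|k _].
  by rewrite mxE -expr2 exprn_even_gt0.
by rewrite mxE -expr2 sqr_ge0.
Qed.

Lemma cV_row_inverse n (x : 'cV[R]_n) : x != 0 -> exists l : 'rV[R]_n, l *m x = 1.
Proof.
move=> x_neq0; have x2_gt0 := trmx_mul_self_gt0 x_neq0.
exists (((x^T *m x) 0 0)^-1 *: x^T).
apply/matrixP=> i j; rewrite !ord1 -scalemxAl [LHS]mxE mulVf ?gt_eqF //.
by rewrite mxE.
Qed.

Lemma cV_neq0 n : (0 < n)%N -> exists x : 'cV[R]_n, x != 0.
Proof.
case: n => // n _; exists (delta_mx ord0 0).
by apply/negP => /eqP/matrixP/(_ ord0 0); rewrite !mxE !eqxx => /eqP; rewrite oner_eq0.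
Qed.

Lemma quadratic_ge0_lead_ge0 (a b c : R) :
  (forall t, 0 <= c + t * b + t ^+ 2 * a) -> 0 <= a.
Proof.
move=> quad_ge0; rewrite leNgt; apply/negP => a_lt0.
pose g := `|c|; pose s := 1 + g / - a.
have s_ge1 : 1 <= s by rewrite /s lerDl divr_ge0 ?normr_ge0 // oppr_ge0 ltW.
have as_eq : a * s = a - g by rewrite /s; field; rewrite lt_eqF.
have g_ge0 : 0 <= g := normr_ge0 c.
have c_le : c <= g := ler_norm c.
have := quad_ge0 s; have := quad_ge0 (- s).
nra.
Qed.

Lemma mulmx_kerS r q (D : 'M[R]_r) (B : 'M[R]_(q, r)) :
  (forall x : 'cV[R]_r, D *m x = 0 -> B *m x = 0) ->
  forall k (Y : 'M[R]_(r, k)), D *m Y = 0 -> B *m Y = 0.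
Proof.
move=> kerS k Y DY0; apply/matrixP=> i j.
have := kerS (col j Y); rewrite !colE mulmxA DY0 mul0mx => /(_ erefl).
by move/(congr1 (fun v : 'cV[R]_q => v i 0)); rewrite mulmxA -colE !mxE.
Qed.

Lemma psd_rank_one_update n (P : 'M[R]_n) (x : 'cV[R]_n) (d : R) :
  psd P -> x != 0 -> d <= 0 -> 0 <= qform P x + d ->
  exists l : 'rV[R]_n, l *m x = 1 /\ forall v, 0 <= qform P v + ((l *m v) 0 0) ^+ 2 * d.
Proof.
move=> P_psd x_neq0 d_le0 Pxd_ge0.
have [Px0 | Px_neq0] := eqVneq (qform P x) 0.
  have -> : d = 0 by lra.
  have [l lx1] := cV_row_inverse x_neq0.
  by exists l; split=> // v; rewrite mulr0 addr0.
set a := qform P x in Px_neq0 Pxd_ge0 *.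
have a_gt0 : 0 < a by rewrite lt_neqAle eq_sym Px_neq0 P_psd.
(* [l v] is the coefficient of the P-orthogonal projection of [v] onto [x] *)
exists ((2 * a)^-1 *: (x^T *m (P + P^T))); split.
  apply/matrixP=> i j; rewrite !ord1 -scalemxAl [LHS]mxE polarE polar_diag mxE /=.
  by apply: mulVf; rewrite mulf_neq0 // gt_eqF.
move=> v; rewrite -scalemxAl [X in X ^+ 2]mxE polarE.
set b := polar P x v; set w := (2 * a)^-1 * b.
have b_eq : b = 2 * a * w by rewrite /w mulrA mulfV ?mul1r // mulf_neq0 // gt_eqF.
have := P_psd (v + (- w) *: x); rewrite qformDZ polarC -/b -/a => proj_ge0.
have -> : qform P v + w ^+ 2 * d =
    (qform P v + - w * b + (- w) ^+ 2 * a) + w ^+ 2 * (a + d).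
  by rewrite b_eq; ring.
by rewrite addr_ge0 // mulr_ge0 ?sqr_ge0.
Qed.

End QuadraticForms.

Section PiSet.
Variables (R : realType) (q r : nat).
Implicit Types (M N : 'M[R]_(q + r)).

Lemma qform_col_mx_schur N (X : 'M[R]_r) :
  N^T = N -> drsubmx N *m X *m dlsubmx N = dlsubmx N ->
  forall xi eta, qform N (col_mx xi eta) =
   qform (ulsubmx N - ursubmx N *m X *m dlsubmx N) xi
   + qform (drsubmx N) (eta + X *m dlsubmx N *m xi).
Proof.
move=> N_sym DXC xi eta.
set A := ulsubmx N; set B := ursubmx N; set C := dlsubmx N; set D := drsubmx N.
have D_sym : D^T = D by rewrite /D trmx_drsub N_sym.
have BtC : B^T = C by rewrite /B trmx_ursub N_sym.
set u := X *m C *m xi.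
have Du : D *m u = C *m xi by rewrite /u !mulmxA DXC.
have uD : u^T *m D = xi^T *m B by rewrite -D_sym -trmx_mul Du trmx_mul -BtC trmxK.
rewrite /qform -{1}(submxK N) tr_col_mx mul_row_block mul_row_col -/A -/B -/C -/D.
have -> : (xi^T *m A + eta^T *m C) *m xi + (xi^T *m B + eta^T *m D) *m eta =
    xi^T *m (A - B *m X *m C) *m xi + (eta + u)^T *m D *m (eta + u).
  have BXC : xi^T *m (B *m X *m C) *m xi = xi^T *m B *m u by rewrite /u !mulmxA.
  rewrite mulmxBr mulmxBl BXC [(eta + u)^T]linearD /= !mulmxDl uD !mulmxDr.
  rewrite -[eta^T *m D *m u]mulmxA Du !mulmxA.
  move: (xi^T *m A *m xi) (eta^T *m C *m xi) (xi^T *m B *m eta)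
    (eta^T *m D *m eta) (xi^T *m B *m X *m C *m xi) => a b c d e.
  by apply/matrixP=> i j; rewrite !mxE; lra.
by rewrite [LHS]mxE.
Qed.

(* The kernel condition of [Pi_{q,r}] says [N21] lies in the range of [N22]. *)
Lemma MP_inverse_range N (X : 'M[R]_r) :
  N^T = N -> is_MP_inverse (drsubmx N) X ->
  (forall x : 'cV[R]_r, drsubmx N *m x = 0 -> ursubmx N *m x = 0) ->
  drsubmx N *m X *m dlsubmx N = dlsubmx N.
Proof.
move=> N_sym [DXD _ _ _] kerS.
set B := ursubmx N; set C := dlsubmx N; set D := drsubmx N.
have D_sym : D^T = D by rewrite /D trmx_drsub N_sym.
have BtC : B^T = C by rewrite /B trmx_ursub N_sym.
have DXtD : D *m X^T *m D = D.
  by have := congr1 trmx DXD; rewrite !trmx_mul D_sym mulmxA.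
have D_ann : D *m (1%:M - X^T *m D) = 0 by rewrite mulmxBr mulmx1 mulmxA DXtD subrr.
have /eqP := mulmx_kerS kerS D_ann; rewrite mulmxBr mulmx1 subr_eq0 => /eqP BXD.
have := congr1 trmx BXD; rewrite -/B !trmx_mul trmxK D_sym BtC => CXD.
by rewrite -CXD.
Qed.

Lemma Pi_set_qform_decomposition N : Pi_set N ->
  exists (P : 'M[R]_q) (K : 'M[R]_(r, q)), psd P /\ forall xi eta,
    qform N (col_mx xi eta) = qform P xi + qform (drsubmx N) (eta + K *m xi).
Proof.
case=> N_sym _ [X [X_MP P_psd]] kerS.
exists (ulsubmx N - ursubmx N *m X *m dlsubmx N), (X *m dlsubmx N).
split=> // xi eta; exact/qform_col_mx_schur/MP_inverse_range.
Qed.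

Lemma qform_IZ (M : 'M[R]_(q + r)) (Z : 'M[R]_(r, q)) v :
  qform ((IZ Z)^T *m M *m IZ Z) v = qform M (col_mx v (Z *m v)).
Proof. by rewrite qform_mulmx /IZ mul_col_mx mul1mx. Qed.

Lemma Zset_graph N xi eta : Pi_set N -> xi != 0 -> 0 <= qform N (col_mx xi eta) ->
  exists Z : 'M[R]_(r, q), Zset N Z /\ Z *m xi = eta.
Proof.
move=> N_Pi xi_neq0; have [_ D_nsd _ _] := N_Pi.
have [P [K [P_psd NE]]] := Pi_set_qform_decomposition N_Pi.
rewrite NE; set z := eta + K *m xi => Nx_ge0.
have [l [lxi1 l_ge0]] := psd_rank_one_update P_psd xi_neq0 (D_nsd z) Nx_ge0.
exists (- K + z *m l); split.
  move=> v; rewrite qform_IZ NE mulmxDl mulNmx addrAC addNr add0r -mulmxA.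
  by rewrite [l *m v]mx11_scalar mul_mx_scalar qformZ.
by rewrite mulmxDl mulNmx -mulmxA lxi1 mulmx1 /z addrC addrK.
Qed.

Lemma eigenvalue_gt0_top_gt0 N :
  nsd (drsubmx N) -> (exists a : R, 0 < a /\ eigenvalue N a) -> (0 < q)%N.
Proof.
move=> D_nsd [a [a_gt0 /eigenvalueP [v vN v_neq0]]].
rewrite ltnNge; apply/negP => q_le0.
have top0 : usubmx v^T = 0.
  by apply/matrixP=> i; have := leq_trans (ltn_ord i) q_le0.
have Nv : qform N v^T = a * (v *m v^T) 0 0 by rewrite /qform trmxK vN -scalemxAl mxE.
have := D_nsd (dsubmx v^T); rewrite -qform_col0_mx -top0 vsubmxK Nv.
have := trmx_mul_self_gt0 (x := v^T); rewrite trmx_eq0 trmxK => /(_ v_neq0) v2_gt0.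
by rewrite leNgt pmulr_rgt0 ?v2_gt0.
Qed.

Lemma Zset_sub_qform_ge0 M N : Pi_set N -> (0 < q)%N ->
  (forall Z, Zset N Z -> Zset M Z) ->
  forall x, 0 <= qform N x -> 0 <= qform M x.
Proof.
move=> N_Pi q_gt0 sub x; rewrite -(vsubmxK x).
have top_ge0 xi eta : xi != 0 -> 0 <= qform N (col_mx xi eta) -> 0 <= qform M (col_mx xi eta).
  move=> xi_neq0 /(Zset_graph N_Pi xi_neq0) [Z [ZN <-]].
  by rewrite -qform_IZ; apply: sub.
have [xi0 | xi_neq0] := eqVneq (usubmx x) 0; last exact: top_ge0.
rewrite xi0 qform_col0_mx; set eta := dsubmx x => Deta_ge0.
have [P [K [P_psd NE]]] := Pi_set_qform_decomposition N_Pi.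
have [x1 x1_neq0] := cV_neq0 R q_gt0.
set y := col_mx x1 (- (K *m x1)).
apply: (quadratic_ge0_lead_ge0 (b := polar M y (col_mx 0 eta)) (c := qform M y)) => t.
rewrite -qformDZ scale_col_mx add_col_mx scaler0 addr0; apply: top_ge0 => //.
rewrite NE addrAC addNr add0r qformZ.
by rewrite addr_ge0 // mulr_ge0 ?sqr_ge0.
Qed.

Lemma Zset_sub_pos_qform_gt0 M N : Pi_set N -> nd (drsubmx N) ->
  (forall Z, Zset N Z -> Zset_pos M Z) ->
  forall x, x != 0 -> 0 <= qform N x -> 0 < qform M x.
Proof.
move=> N_Pi D_nd sub x; rewrite -(vsubmxK x).
have [xi0 | xi_neq0] := eqVneq (usubmx x) 0.
  rewrite xi0 col_mx_eq0 eqxx qform_col0_mx => eta_neq0.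
  by rewrite leNgt D_nd.
move=> _ /(Zset_graph N_Pi xi_neq0) [Z [ZN <-]].
by rewrite -qform_IZ; apply: sub.
Qed.

Lemma qform_ge0_Zset_sub M N :
  (forall x, 0 <= qform N x -> 0 <= qform M x) ->
  forall Z, Zset N Z -> Zset M Z.
Proof. by move=> NM Z ZN v; rewrite qform_IZ NM // -qform_IZ. Qed.

Lemma qform_gt0_Zset_pos_sub M N :
  (forall x, x != 0 -> 0 <= qform N x -> 0 < qform M x) ->
  forall Z, Zset N Z -> Zset_pos M Z.
Proof.
move=> NM Z ZN v v_neq0; rewrite qform_IZ NM ?col_mx_eq0 ?negb_and ?v_neq0 //.
by rewrite -qform_IZ.
Qed.

End PiSet.

Theorem mainTheorem7 (R : realType) (q r : nat) (M N : 'M[R]_(q + r)) :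
  sym_mx M -> sym_mx N -> Pi_set N ->
  ((exists a : R, 0 < a /\ eigenvalue N a) ->
     ((forall Z : 'M[R]_(r, q), Zset N Z -> Zset M Z) <->
      (forall x : 'cV[R]_(q + r), 0 <= qform N x -> 0 <= qform M x)))
  /\
  (nd (drsubmx N) ->
     ((forall Z : 'M[R]_(r, q), Zset N Z -> Zset_pos M Z) <->
      (forall x : 'cV[R]_(q + r), x != 0 -> 0 <= qform N x -> 0 < qform M x))).
Proof.
move=> _ _ N_Pi; have [_ D_nsd _ _] := N_Pi.
split=> [pos_eig | D_nd]; split.
- exact/Zset_sub_qform_ge0/(eigenvalue_gt0_top_gt0 D_nsd).
- exact: qform_ge0_Zset_sub.
- exact: Zset_sub_pos_qform_gt0.
- exact: qform_gt0_Zset_pos_sub.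
Qed.
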